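(* Consider a tripartite Bell scenario in which Alice has inputs $A_1,A_2,A_3$, Bob has inputs $B_1,B_2$ and Charlie has a single input $C_1$, and every input has four outcomes labelled by bit pairs $x=(x_0,x_1)\in\{0,1\}^2$. For an observable $X$ with outcome $(x_0,x_1)$ define the $\pm1$-valued quantities $X^{10}=(-1)^{x_0}$, $X^{01}=(-1)^{x_1}$, $X^{11}=(-1)^{x_0\oplus x_1}$, and write $\langle X^{ij}Y^{kl}\rangle$ for the expectation of $X^{ij}Y^{kl}$ when $X$ and $Y$ are measured jointly by different parties. Define $$\mathcal{I}=\langle A_1^{10}B_1^{10}\rangle+\langle A_1^{01}B_2^{10}\rangle+\langle A_1^{11}C_1^{10}\rangle+\langle A_2^{10}B_1^{01}\rangle+\langle A_2^{01}B_2^{01}\rangle+\langle A_2^{11}C_1^{01}\rangle+\langle A_3^{10}B_1^{11}\rangle+\langle A_3^{01}B_2^{11}\rangle-\langle A_3^{11}C_1^{11}\rangle .$$ Then: (i) the Alice–Bob part of $\mathcal{I}$ (the six terms involving $B_1,B_2$) attains its maximal value $6$ in a local deterministic model, and the Alice–Charlie part (the three terms involving $C_1$) attains its maximal value $3$ in a local deterministic model; (ii) every local hidden variable model satisfies $\mathcal{I}\le 7$; (iii) there exists a no-signaling behaviour $P(a,b,c\mid A_k,B_l,C_1)$ for which $\mathcal{I}=9$.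
   Context: A local hidden variable model is a convex mixture of deterministic assignments of an outcome to each of the inputs $A_1,A_2,A_3,B_1,B_2,C_1$. A no-signaling behaviour is a family of distributions $P(a,b,c\mid A_k,B_l,C_1)$, $k\in\{1,2,3\}$, $l\in\{1,2\}$, such that the marginal distribution of any subset of the parties does not depend on the inputs of the remaining parties. *)

From mathcomp Require Import all_boot all_order all_algebra.
Set Implicit Arguments. Unset Strict Implicit. Unset Printing Implicit Defensive.
Import Order.TTheory GRing.Theory Num.Theory.
Local Open Scope ring_scope.

Definition obs := (bool * bool)%type.

(* Alice's inputs A_1,A_2,A_3 are 'I_3 (A_k = index k-1);
   Bob's inputs B_1,B_2 are 'I_2; Charlie has a single input C_1 (left implicit). *)
Definition A1 : 'I_3 := @Ordinal 3 0 isT.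
Definition A2 : 'I_3 := @Ordinal 3 1 isT.
Definition A3 : 'I_3 := @Ordinal 3 2 isT.
Definition B1 : 'I_2 := @Ordinal 2 0 isT.
Definition B2 : 'I_2 := @Ordinal 2 1 isT.

Section Bell.
Variable R : realFieldType.

Definition sgnb (b : bool) : R := if b then -1 else 1.

Definition X10 (x : obs) : R := sgnb x.1.
Definition X01 (x : obs) : R := sgnb x.2.
Definition X11 (x : obs) : R := sgnb (x.1 (+) x.2).

(* A behaviour: P k l a b c = P(a,b,c | A_k, B_l, C_1). *)
Definition behaviour := 'I_3 -> 'I_2 -> obs -> obs -> obs -> R.

Definition is_behaviour (P : behaviour) : Prop :=
  (forall k l a b c, 0 <= P k l a b c) /\
  (forall k l, \sum_(a : obs) \sum_(b : obs) \sum_(c : obs) P k l a b c = 1).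

(* Charlie has a single input, so only the
   dependencies on Alice's and Bob's inputs need to be ruled out. *)
Definition no_signaling (P : behaviour) : Prop :=
  is_behaviour P /\
  (forall k l l' a c, \sum_(b : obs) P k l a b c = \sum_(b : obs) P k l' a b c) /\
  (forall k k' l b c, \sum_(a : obs) P k l a b c = \sum_(a : obs) P k' l a b c) /\
  (forall k l l' a, \sum_(b : obs) \sum_(c : obs) P k l a b c
                  = \sum_(b : obs) \sum_(c : obs) P k l' a b c) /\
  (forall k k' l b, \sum_(a : obs) \sum_(c : obs) P k l a b c
                  = \sum_(a : obs) \sum_(c : obs) P k' l a b c) /\
  (forall k k' l l' c, \sum_(a : obs) \sum_(b : obs) P k l a b c
                     = \sum_(a : obs) \sum_(b : obs) P k' l' a b c).

Definition corrAB (P : behaviour) (k : 'I_3) (l : 'I_2) (f g : obs -> R) : R :=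
  \sum_(a : obs) \sum_(b : obs) \sum_(c : obs) P k l a b c * f a * g b.

(* <A_k^f C_1^h>, computed from the joint distribution with Bob's input B_1
   (for no-signaling behaviours this does not depend on Bob's input). *)
Definition corrAC (P : behaviour) (k : 'I_3) (f h : obs -> R) : R :=
  \sum_(a : obs) \sum_(b : obs) \sum_(c : obs) P k B1 a b c * f a * h c.

Definition I_AB (P : behaviour) : R :=
  corrAB P A1 B1 X10 X10 + corrAB P A1 B2 X01 X10 +
  corrAB P A2 B1 X10 X01 + corrAB P A2 B2 X01 X01 +
  corrAB P A3 B1 X10 X11 + corrAB P A3 B2 X01 X11.

Definition I_AC (P : behaviour) : R :=
  corrAC P A1 X11 X10 + corrAC P A2 X11 X01 - corrAC P A3 X11 X11.

Definition I_val (P : behaviour) : R := I_AB P + I_AC P.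

Definition strat := ({ffun 'I_3 -> obs} * {ffun 'I_2 -> obs} * obs)%type.

Definition det_behaviour (s : strat) : behaviour :=
  fun k l a b c =>
    if [&& a == s.1.1 k, b == s.1.2 l & c == s.2] then 1 else 0.

Definition lhv_weights (w : strat -> R) : Prop :=
  (forall s, 0 <= w s) /\ \sum_(s : strat) w s = 1.

Definition lhv_behaviour (w : strat -> R) : behaviour :=
  fun k l a b c => \sum_(s : strat) w s * det_behaviour s k l a b c.

End Bell.

From mathcomp Require Import all_boot all_order all_algebra.
From mathcomp Require Import ring lra.
Import Order.TTheory GRing.Theory Num.Theory.
Local Open Scope ring_scope.

(* In a deterministic model every correlator of I is a sign (-1)^e of a parity e
   of outcome bits.  Each outcome bit occurs in exactly two of the nine parities,
   so the parity of the subtracted term A_3^11 C_1^11 is the xor of the other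
   eight: the nine terms cannot all contribute +1, and I <= 7 for deterministic
   models, hence by convexity for all local ones.  The value 9 is reached by the
   box that is uniform on the outcomes making every term contribute +1; its
   marginals are uniform or fixed by a single parity of Alice's and Charlie's
   outcomes, which makes it no-signaling. *)

Lemma big_obs (V : nmodType) (F : obs -> V) :
  \sum_(x : obs) F x = F (false, false) + F (false, true) + F (true, false) + F (true, true).
Proof.
rewrite (eq_bigr (fun x => F (x.1, x.2))); last by case.
rewrite -(pair_bigA _ (fun x0 x1 => F (x0, x1))) /= !big_bool /=.
by rewrite addrC [F (false, true) + _]addrC [F (true, true) + _]addrC !addrA.
Qed.

Lemma sum3_indicator (V : nmodType) (T1 T2 T3 : finType) (x : T1) (y : T2) (z : T3)
    (F : T1 -> T2 -> T3 -> V) :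
  \sum_a \sum_b \sum_c (if [&& a == x, b == y & c == z] then F a b c else 0) = F x y z.
Proof.
rewrite (bigD1 x) //= [X in _ + X]big1 => [|a /negPf ->]; last by do 2!apply: big1 => ? _.
rewrite eqxx addr0 (bigD1 y) //= [X in _ + X]big1 => [|b /negPf ->]; last by apply: big1.
rewrite eqxx addr0 (bigD1 z) //= [X in _ + X]big1 => [|c /negPf ->] //.
by rewrite eqxx addr0.
Qed.

Section Bell.
Variable R : realFieldType.
Implicit Types (s : strat) (w : strat -> R) (k : 'I_3) (l : 'I_2).

Lemma sgnb_le1 b : sgnb R b <= 1.
Proof. by case: b; rewrite /sgnb; lra. Qed.

Lemma sgnb_geN1 b : -1 <= sgnb R b.
Proof. by case: b; rewrite /sgnb; lra. Qed.

Lemma sgnbN b : sgnb R (~~ b) = - sgnb R b.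
Proof. by case: b; rewrite /sgnb /= ?opprK. Qed.

Lemma sgnbM a b : sgnb R a * sgnb R b = sgnb R (a (+) b).
Proof. by case: a; case: b; rewrite /sgnb /= ?mulrNN ?mulr1 ?mul1r ?mulN1r. Qed.

Lemma sum_sgnb_le (t : seq bool) : \sum_(x <- t) sgnb R x <= (size t)%:R.
Proof. by rewrite -sum1_size natr_sum ler_sum // => x _; apply: sgnb_le1. Qed.

Lemma sum_sgnb_sub_xor (t : seq bool) :
  \sum_(x <- t) sgnb R x - sgnb R (foldr addb false t) <= (size t)%:R - 1.
Proof.
elim: t => [|x t IHt]; first by rewrite big_nil /sgnb /=; lra.
have := sum_sgnb_le t; have := sgnb_le1 (foldr addb false t).
by rewrite big_cons /= -addn1 natrD; case: x => /=; rewrite ?sgnbN; lra.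
Qed.

Lemma sum_convex_le (I : finType) (w F : I -> R) (M : R) :
  (forall i, 0 <= w i) -> \sum_i w i = 1 -> (forall i, F i <= M) ->
  \sum_i w i * F i <= M.
Proof.
move=> w_ge0 w_sum1 F_le; apply: le_trans (_ : \sum_i w i * M <= M).
  by apply: ler_sum => i _; apply: ler_wpM2l.
by rewrite -mulr_suml w_sum1 mul1r.
Qed.

Lemma corrAB_det s k l f g : corrAB (det_behaviour R s) k l f g = f (s.1.1 k) * g (s.1.2 l).
Proof.
rewrite /corrAB /det_behaviour -(@sum3_indicator _ _ _ _ _ _ s.2 (fun a b c => f a * g b)).
by do 3!(apply: eq_bigr => ? _); case: ifP; rewrite ?mul1r ?mul0r.
Qed.

Lemma corrAC_det s k f h : corrAC (det_behaviour R s) k f h = f (s.1.1 k) * h s.2.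
Proof.
rewrite /corrAC /det_behaviour -(@sum3_indicator _ _ _ _ _ (s.1.2 B1) _ (fun a b c => f a * h c)).
by do 3!(apply: eq_bigr => ? _); case: ifP; rewrite ?mul1r ?mul0r.
Qed.

Lemma sum3_lhv_behaviour w k l (G : obs -> obs -> obs -> R) :
  \sum_a \sum_b \sum_c lhv_behaviour w k l a b c * G a b c =
  \sum_s w s * \sum_a \sum_b \sum_c det_behaviour R s k l a b c * G a b c.
Proof.
rewrite /lhv_behaviour.
under eq_bigr do under eq_bigr do under eq_bigr do rewrite mulr_suml.
under eq_bigr do under eq_bigr do rewrite exchange_big.
under eq_bigr do rewrite exchange_big.
rewrite exchange_big; apply: eq_bigr => s _.
rewrite mulr_sumr; apply: eq_bigr => a _.
rewrite mulr_sumr; apply: eq_bigr => b _.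
by rewrite mulr_sumr; apply: eq_bigr => c _; rewrite mulrA.
Qed.

Lemma corrAB_lhv w k l f g :
  corrAB (lhv_behaviour w) k l f g = \sum_s w s * corrAB (det_behaviour R s) k l f g.
Proof.
rewrite /corrAB; under eq_bigr do under eq_bigr do under eq_bigr do rewrite -mulrA.
rewrite sum3_lhv_behaviour; apply: eq_bigr => s _; congr (_ * _).
by do 3!apply: eq_bigr => ? _; rewrite mulrA.
Qed.

Lemma corrAC_lhv w k f h :
  corrAC (lhv_behaviour w) k f h = \sum_s w s * corrAC (det_behaviour R s) k f h.
Proof.
rewrite /corrAC; under eq_bigr do under eq_bigr do under eq_bigr do rewrite -mulrA.
rewrite sum3_lhv_behaviour; apply: eq_bigr => s _; congr (_ * _).
by do 3!apply: eq_bigr => ? _; rewrite mulrA.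
Qed.

Lemma I_val_lhv w : I_val (lhv_behaviour w) = \sum_s w s * I_val (det_behaviour R s).
Proof.
rewrite /I_val /I_AB /I_AC !corrAB_lhv !corrAC_lhv.
under [RHS]eq_bigr do rewrite !(mulrDr, mulrN).
by rewrite !big_split /= sumrN.
Qed.

Lemma I_AB_det_le6 s : I_AB (det_behaviour R s) <= 6.
Proof.
rewrite /I_AB !corrAB_det /X10 /X01 /X11 !sgnbM.
apply: (@le_trans _ _ (1 + 1 + 1 + 1 + 1 + 1)); last by lra.
by do !apply: lerD; apply: sgnb_le1.
Qed.

Lemma I_AC_det_le3 s : I_AC (det_behaviour R s) <= 3.
Proof.
rewrite /I_AC !corrAC_det /X10 /X01 /X11 !sgnbM.
apply: (@le_trans _ _ (1 + 1 - -1)); last by lra.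
by apply: lerB; [apply: lerD|]; rewrite ?sgnb_le1 ?sgnb_geN1.
Qed.

Lemma I_val_det_le7 s : I_val (det_behaviour R s) <= 7.
Proof.
rewrite /I_val /I_AB /I_AC !corrAB_det !corrAC_det /X10 /X01 /X11 !sgnbM.
case: (s.1.1 A1) => [p1 q1]; case: (s.1.1 A2) => [p2 q2]; case: (s.1.1 A3) => [p3 q3].
case: (s.1.2 B1) => [u1 v1]; case: (s.1.2 B2) => [u2 v2]; case: s.2 => [c1 c2] /=.
set t := [:: p1 (+) u1; q1 (+) u2; p2 (+) v1; q2 (+) v2; p3 (+) (u1 (+) v1);
             q3 (+) (u2 (+) v2); p1 (+) q1 (+) c1; p2 (+) q2 (+) c2].
have parity : p3 (+) q3 (+) (c1 (+) c2) = foldr addb false t.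
  by rewrite {}/t; case: p1; case: q1; case: p2; case: q2; case: p3; case: q3;
     case: u1; case: v1; case: u2; case: v2; case: c1; case: c2.
have := sum_sgnb_sub_xor t; rewrite -parity !big_cons big_nil /=; lra.
Qed.

Lemma I_val_lhv_le7 w : lhv_weights w -> I_val (lhv_behaviour w) <= 7.
Proof.
by case=> w_ge0 w_sum1; rewrite I_val_lhv sum_convex_le // => s; apply: I_val_det_le7.
Qed.

Definition obs_bit (i : nat) (x : obs) : bool :=
  match i with 0 => x.1 | 1 => x.2 | _ => x.1 (+) x.2 end.

(* obs_bit 0, 1, 2 is the bit whose sign is X^10, X^01, X^11.  The box is
   uniform on the 16 outcomes (a, b, c) for which the A_k B_l and A_k C_1 terms
   of I both contribute +1 (so A_3 and C_1 are anticorrelated). *)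
Definition ns_box : behaviour R := fun k l a b c =>
  ((obs_bit l a == obs_bit k b) && (obs_bit 2 a == obs_bit k c (+) (k == A3)))%:R / 16.

Ltac case_I3 k := case: k => [[|[|[|?]]] ?] //.
Ltac case_I2 l := case: l => [[|[|?]] ?] //.
Ltac case_obs x := case: x => [[] []].

Lemma ns_box_sumB k l a c :
  \sum_b ns_box k l a b c = (obs_bit 2 a == obs_bit k c (+) (k == A3))%:R / 8.
Proof.
rewrite big_obs /ns_box -!mulrDl -!natrD.
transitivity ((2 * (obs_bit 2 a == obs_bit k c (+) (k == A3)))%:R / 16 : R).
  by congr (_%:R / _); case_I3 k; case_I2 l; case_obs a; case_obs c.
by rewrite natrM; field.
Qed.

Lemma ns_box_sumA k l b c : \sum_a ns_box k l a b c = 1 / 16.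
Proof.
rewrite big_obs /ns_box -!mulrDl -!natrD.
rewrite -[X in _ = X / _]mulr1n; congr (_%:R / _).
by case_I3 k; case_I2 l; case_obs b; case_obs c.
Qed.

Lemma ns_box_no_signaling : no_signaling ns_box.
Proof.
split; [split|].
- by move=> k l a b c; rewrite /ns_box divr_ge0 ?ler0n.
- move=> k l; rewrite exchange_big; under eq_bigr do rewrite exchange_big.
  under eq_bigr do under eq_bigr do rewrite ns_box_sumA.
  by rewrite !sumr_const card_prod card_bool -mulrnA -mulr_natl; field.
split; first by move=> k l l' a c; rewrite !ns_box_sumB.
split; first by move=> k k' l b c; rewrite !ns_box_sumA.
split.
  move=> k l l' a; rewrite [LHS]exchange_big [RHS]exchange_big.
  by apply: eq_bigr => c _; rewrite !ns_box_sumB.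
split.
  move=> k k' l b; rewrite [LHS]exchange_big [RHS]exchange_big.
  by apply: eq_bigr => c _; rewrite !ns_box_sumA.
move=> k k' l l' c; rewrite [LHS]exchange_big [RHS]exchange_big.
by apply: eq_bigr => b _; rewrite !ns_box_sumA.
Qed.

Lemma I_val_ns_box : I_val ns_box = 9.
Proof.
rewrite /I_val /I_AB /I_AC /corrAB /corrAC !big_obs /ns_box /X10 /X01 /X11 /sgnb /=.
by field.
Qed.

End Bell.

Theorem mainTheorem2 (R : realFieldType) :
  (* (i) Alice–Bob part: maximum 6 over deterministic models, attained *)
  ((exists s : strat, I_AB (det_behaviour R s) = 6) /\
   (forall s : strat, I_AB (det_behaviour R s) <= 6)) /\
  (* (i) Alice–Charlie part: maximum 3 over deterministic models, attained *)
  ((exists s : strat, I_AC (det_behaviour R s) = 3) /\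
   (forall s : strat, I_AC (det_behaviour R s) <= 3)) /\
  (* (ii) local bound *)
  (forall w : strat -> R, lhv_weights w -> I_val (lhv_behaviour w) <= 7) /\
  (* (iii) no-signaling value 9 *)
  (exists P : behaviour R, no_signaling P /\ I_val P = 9).
Proof.
split; [split|split; [split|split]].
- exists ([ffun=> (false, false)], [ffun=> (false, false)], (false, false)).
  by rewrite /I_AB !corrAB_det !ffunE /X10 /X01 /X11 /sgnb /=; lra.
- exact: I_AB_det_le6.
- exists ([ffun k : 'I_3 => (k == A3, false)], [ffun=> (false, false)], (false, false)).
  by rewrite /I_AC !corrAC_det !ffunE /X10 /X01 /X11 /sgnb /=; lra.
- exact: I_AC_det_le3.
- exact: I_val_lhv_le7.
- by exists (ns_box R); split; [apply: ns_box_no_signaling | apply: I_val_ns_box].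
Qed.
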